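(* Let $\mathcal C$ be a pointed category with finite coproducts, let $\mathcal D$ be the category of groups or of abelian groups, and let $F\colon\mathcal C\to\mathcal D$ be diagonalizable, i.e. $F=B\circ\Delta$ for some bireduced bifunctor $B\colon\mathcal C\times\mathcal C\to\mathcal D$ (where $\Delta$ is the diagonal functor). Then $T_1F=0$.
   Context: - $B$ bireduced means $B(X,0)=B(0,Y)=0$ for all $X,Y$. - For a reduced functor $F$, $cr_2F(X,X)=\ker(F(X\vee X)\to F(X)\times F(X))$, induced by the two retractions $r_1,r_2\colon X\vee X\to X$. - $T_1F(X)$ is the quotient of $F(X)$ by the image (a normal subgroup) of $cr_2F(X,X)\subseteq F(X\vee X)$ under $F(\nabla)$, where $\nabla$ is the folding map. *)

Set Implicit Arguments.
Unset Strict Implicit.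

(** Groups (the target category D; abelian groups form a full subcategory). *)
Record Group := {
  gcar :> Type;
  gmul : gcar -> gcar -> gcar;
  gone : gcar;
  ginv : gcar -> gcar;
  gmulA : forall x y z, gmul x (gmul y z) = gmul (gmul x y) z;
  gmul1l : forall x, gmul gone x = x;
  gmul1r : forall x, gmul x gone = x;
  gmulVl : forall x, gmul (ginv x) x = gone;
  gmulVr : forall x, gmul x (ginv x) = gone }.
Arguments gmul {g}.
Arguments gone {g}.
Arguments ginv {g}.

Definition is_ghom (G H : Group) (f : G -> H) : Prop :=
  forall x y, f (gmul x y) = gmul (f x) (f y).

Record Cat := {
  Ob : Type;
  Hom : Ob -> Ob -> Type;
  comp : forall X Y Z : Ob, Hom Y Z -> Hom X Y -> Hom X Z;
  idm : forall X : Ob, Hom X X;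
  comp_id_l : forall X Y (f : Hom X Y), comp (idm Y) f = f;
  comp_id_r : forall X Y (f : Hom X Y), comp f (idm X) = f;
  compA : forall X Y Z W (h : Hom Z W) (g : Hom Y Z) (f : Hom X Y),
      comp h (comp g f) = comp (comp h g) f }.
Arguments Hom {c}.
Arguments comp {c X Y Z}.
Arguments idm {c}.

(** Pointed categories with finite coproducts: a zero object (which is also
    the initial object, i.e. the empty coproduct) and binary coproducts. *)
Record PtCoprodCat := {
  pcat :> Cat;
  zero : Ob pcat;
  to_zero : forall X : Ob pcat, Hom X zero;
  from_zero : forall X : Ob pcat, Hom zero X;
  to_zero_uniq : forall X (f : Hom X zero), f = to_zero X;
  from_zero_uniq : forall X (f : Hom zero X), f = from_zero X;
  coprod : Ob pcat -> Ob pcat -> Ob pcat;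
  inl : forall X Y, Hom X (coprod X Y);
  inr : forall X Y, Hom Y (coprod X Y);
  copair : forall X Y W, Hom X W -> Hom Y W -> Hom (coprod X Y) W;
  copair_inl : forall X Y W (f : Hom X W) (g : Hom Y W),
      comp (copair f g) (inl X Y) = f;
  copair_inr : forall X Y W (f : Hom X W) (g : Hom Y W),
      comp (copair f g) (inr X Y) = g;
  copair_uniq : forall X Y W (f : Hom X W) (g : Hom Y W) (h : Hom (coprod X Y) W),
      comp h (inl X Y) = f -> comp h (inr X Y) = g -> h = copair f g }.
Arguments zero {p}.
Arguments coprod {p}.
Arguments copair {p X Y W}.
Arguments to_zero {p}.
Arguments from_zero {p}.

Section Constructions.
Variable C : PtCoprodCat.

Definition zmor (X Y : Ob C) : Hom X Y := comp (from_zero Y) (to_zero X).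
Definition r1 (X : Ob C) : Hom (coprod X X) X := copair (idm X) (zmor X X).
Definition r2 (X : Ob C) : Hom (coprod X X) X := copair (zmor X X) (idm X).
Definition fold (X : Ob C) : Hom (coprod X X) X := copair (idm X) (idm X).
End Constructions.

Record Functor (C : Cat) := {
  Fob : Ob C -> Group;
  Fmap : forall X Y : Ob C, Hom X Y -> Fob X -> Fob Y;
  Fmap_hom : forall X Y (f : Hom X Y), is_ghom (Fmap f);
  Fmap_id : forall X (x : Fob X), Fmap (idm X) x = x;
  Fmap_comp : forall X Y Z (g : Hom Y Z) (f : Hom X Y) (x : Fob X),
      Fmap (comp g f) x = Fmap g (Fmap f x) }.
Arguments Fmap {C} f {X Y} _ _ : rename.

Record Bifunctor (C : Cat) := {
  Bob : Ob C -> Ob C -> Group;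
  Bmap : forall X X' Y Y' : Ob C, Hom X X' -> Hom Y Y' -> Bob X Y -> Bob X' Y';
  Bmap_hom : forall X X' Y Y' (f : Hom X X') (g : Hom Y Y'), is_ghom (Bmap f g);
  Bmap_id : forall X Y (x : Bob X Y), Bmap (idm X) (idm Y) x = x;
  Bmap_comp : forall X X' X'' Y Y' Y'' (f' : Hom X' X'') (f : Hom X X')
      (g' : Hom Y' Y'') (g : Hom Y Y') (x : Bob X Y),
      Bmap (comp f' f) (comp g' g) x = Bmap f' g' (Bmap f g x) }.
Arguments Bmap {C} b {X X' Y Y'} _ _ _ : rename.

Definition bireduced (C : PtCoprodCat) (B : Bifunctor C) : Prop :=
  (forall (X : Ob C) (x : Bob B X zero), x = gone) /\
  (forall (Y : Ob C) (x : Bob B zero Y), x = gone).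

Definition diag (C : Cat) (B : Bifunctor C) : Functor C.
Proof.
refine {| Fob := fun X => Bob B X X;
          Fmap := fun X Y f => Bmap B f f |}.
- intros; apply Bmap_hom.
- intros; apply Bmap_id.
- intros; apply Bmap_comp.
Defined.

(** cr_2 F(X,X) = ker(F(X v X) -> F(X) x F(X)), the map being (F r1, F r2). *)
Definition cr2 (C : PtCoprodCat) (F : Functor C) (X : Ob C)
    (z : Fob F (coprod X X)) : Prop :=
  Fmap F (r1 X) z = gone /\ Fmap F (r2 X) z = gone.

Arguments cr2 {C} F X z.

(** T_1 F(X) = F(X) / F(fold)(cr_2 F(X,X)); it is the zero group iff the
    (normal) subgroup F(fold)(cr_2 F(X,X)) is all of F(X). *)
Definition T1_zero_at (C : PtCoprodCat) (F : Functor C) (X : Ob C) : Prop :=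
  forall a : Fob F X, exists z : Fob F (coprod X X),
    cr2 F X z /\ Fmap F (fold X) z = a.

Arguments T1_zero_at {C} F X.

Definition T1_zero (C : PtCoprodCat) (F : Functor C) : Prop :=
  forall X : Ob C, T1_zero_at F X.


(* The witness for [a : B(X,X)] is its image [B(inl, inr) a] in [B(X v X, X v X)]:
   each retraction [r_i] sends one of [inl], [inr] to a zero map, so the image of
   the witness factors through [B(X,0)] or [B(0,X)], while the folding map sends
   both coprojections to the identity and recovers [a]. *)

Lemma ghom_one (G H : Group) (f : G -> H) : is_ghom f -> f gone = gone.
Proof.
  intro Hf.
  assert (Hidem : gmul (f gone) (f gone) = f gone) by (rewrite <- Hf, gmul1l; reflexivity).
  rewrite <- (gmul1l (f gone)), <- (gmulVl (f gone)), <- gmulA, Hidem.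
  reflexivity.
Qed.

Section Bireduced.
Variables (C : PtCoprodCat) (B : Bifunctor C).

Lemma Bmap_zmor_r (Hr : forall (X : Ob C) (x : Bob B X zero), x = gone)
    (X X' Y Y' : Ob C) (f : Hom X X') (x : Bob B X Y) :
  Bmap B f (zmor Y Y') x = gone.
Proof.
  unfold zmor; rewrite <- (comp_id_l f), Bmap_comp.
  rewrite (Hr _ (Bmap B f (to_zero Y) x)).
  apply ghom_one, Bmap_hom.
Qed.

Lemma Bmap_zmor_l (Hl : forall (Y : Ob C) (x : Bob B zero Y), x = gone)
    (X X' Y Y' : Ob C) (g : Hom Y Y') (x : Bob B X Y) :
  Bmap B (zmor X X') g x = gone.
Proof.
  unfold zmor; rewrite <- (comp_id_l g), Bmap_comp.
  rewrite (Hl _ (Bmap B (to_zero X) g x)).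
  apply ghom_one, Bmap_hom.
Qed.

Lemma Bmap_copair_inl_inr (X Y W : Ob C) (f g : Hom X W) (h k : Hom Y W)
    (x : Bob B X Y) :
  Bmap B (copair f h) (copair g k) (Bmap B (inl X Y) (inr X Y) x) = Bmap B f k x.
Proof. rewrite <- Bmap_comp, copair_inl, copair_inr; reflexivity. Qed.

Lemma cr2_diag_inl_inr : bireduced B ->
  forall (X : Ob C) (a : Bob B X X), cr2 (diag B) X (Bmap B (inl X X) (inr X X) a).
Proof.
  intros [Hr Hl] X a; split; simpl.
  - unfold r1; rewrite Bmap_copair_inl_inr; apply (Bmap_zmor_r Hr).
  - unfold r2; rewrite Bmap_copair_inl_inr; apply (Bmap_zmor_l Hl).
Qed.

Lemma fold_diag_inl_inr (X : Ob C) (a : Bob B X X) :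
  Fmap (diag B) (fold X) (Bmap B (inl X X) (inr X X) a) = a.
Proof. simpl; unfold fold; rewrite Bmap_copair_inl_inr; apply Bmap_id. Qed.

End Bireduced.

Theorem proposition2p4 (C : PtCoprodCat) (B : Bifunctor C) :
  bireduced B -> T1_zero (diag B).
Proof.
  intros HB X a.
  exists (Bmap B (inl X X) (inr X X) a).
  split.
  - apply cr2_diag_inl_inr, HB.
  - apply fold_diag_inl_inr.
Qed.
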